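(* Let $G$ be a group given by a presentation $\langle X\mid R\rangle$ in which every $x\in X$ satisfies $x^2=e$ and every relation in $R$ has even length. Let $I=X\setminus\{x\}$ for some $x\in X$, and let $w\in G$ with $w\neq e$. Then $w\in {}^{I}G$ if and only if all reduced expressions of $w$ begin with $x$.
   Context: Every $w\in G$ can be written as a product $x_1^{a_1}\cdots x_r^{a_r}$ with $x_j\in X$, $a_j=\pm1$; the length $l(w)$ is the smallest such $r$, and a reduced expression of $w$ is an expression of $w$ as a product of $l(w)$ elements of $X\cup X^{-1}$. The length of a relation $u=v$ ($u,v$ in the free group $F(X)$) is the length of the word $uv^{-1}$ in $F(X)$. For $I\subseteq X$, ${}^{I}G=\{w\in G: l(yw)>l(w)\ \text{for all } y\in I\}$. *)

From mathcomp Require Import all_boot.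
Set Implicit Arguments. Unset Strict Implicit. Unset Printing Implicit Defensive.

Record group := Group {
  carrier :> Type;
  gmul : carrier -> carrier -> carrier;
  ginv : carrier -> carrier;
  gone : carrier;
  gmulA : forall a b c, gmul a (gmul b c) = gmul (gmul a b) c;
  gmul1 : forall a, gmul gone a = a;
  gmulV : forall a, gmul (ginv a) a = gone
}.

Section Words.
Variable X : eqType.

(* A word in F(X): a sequence of letters x^{+1} (false) or x^{-1} (true). *)
Definition word := seq (X * bool).

Definition inv_word (w : word) : word := rev [seq (p.1, ~~ p.2) | p <- w].

Definition push (p : X * bool) (s : word) : word :=
  match s with
  | q :: s' => if (q.1 == p.1) && (q.2 == ~~ p.2) then s' else p :: s
  | [::] => [:: p]
  end.
Definition free_reduce (w : word) : word := foldr push [::] w.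

(* Length of the relation u = v: length of the reduced word u v^{-1} in F(X). *)
Definition rel_length (r : word * word) : nat :=
  size (free_reduce (r.1 ++ inv_word r.2)).

Inductive pcong (R : word * word -> Prop) : word -> word -> Prop :=
| pc_refl w : pcong R w w
| pc_sym w1 w2 : pcong R w1 w2 -> pcong R w2 w1
| pc_trans w1 w2 w3 : pcong R w1 w2 -> pcong R w2 w3 -> pcong R w1 w3
| pc_free a b x s : pcong R (a ++ [:: (x, s); (x, ~~ s)] ++ b) (a ++ b)
| pc_rel a b u v : R (u, v) -> pcong R (a ++ u ++ b) (a ++ v ++ b).

Variable G : group.
Variable gen : X -> G.

Definition letter (p : X * bool) : G := if p.2 then ginv (gen p.1) else gen p.1.

Definition eval (w : word) : G := foldr (fun p acc => gmul (letter p) acc) (gone G) w.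

Definition presents (R : word * word -> Prop) : Prop :=
  (forall g : G, exists w, eval w = g) /\
  (forall w1 w2, eval w1 = eval w2 <-> pcong R w1 w2).

Definition reduced_expr (g : G) (w : word) : Prop :=
  eval w = g /\ forall w', eval w' = g -> size w <= size w'.

Definition is_length (g : G) (n : nat) : Prop :=
  exists w, reduced_expr g w /\ size w = n.

Definition in_IG (I : pred X) (g : G) : Prop :=
  forall y, I y -> forall n m, is_length (gmul (gen y) g) n -> is_length g m -> m < n.

End Words.

From mathcomp Require Import all_boot.
Set Implicit Arguments. Unset Strict Implicit. Unset Printing Implicit Defensive.

(* The generators being involutions, dropping the first letter y of a reduced
   expression of w gives a reduced expression of y w, and prepending y to a
   reduced expression of y w gives one of w as soon as l(y w) < l(w).  Since
   all relations have even length, the parity of the length of an expression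
   depends only on the element it represents, so l(y w) <> l(w). *)

Section GroupTheory.
Variable G : group.

Lemma gmulgV (a : G) : gmul a (ginv a) = gone G.
Proof.
rewrite -[LHS]gmul1 -[X in gmul X _](gmulV (ginv a)) -gmulA.
by rewrite [X in gmul _ X]gmulA gmulV gmul1 gmulV.
Qed.

Lemma gmulg1 (a : G) : gmul a (gone G) = a.
Proof. by rewrite -(gmulV a) gmulA gmulgV gmul1. Qed.

End GroupTheory.

Section LengthParity.
Variable X : eqType.

Lemma odd_size_push (p : X * bool) (s : word X) :
  odd (size (push p s)) = ~~ odd (size s).
Proof. by case: s => [|q s] //=; case: ifP => _ /=; rewrite negbK. Qed.

Lemma odd_size_free_reduce (w : word X) :
  odd (size (free_reduce w)) = odd (size w).
Proof. by elim: w => //= p w IH; rewrite odd_size_push IH. Qed.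

Lemma pcong_odd_size (R : word X * word X -> Prop) :
  (forall r, R r -> ~~ odd (rel_length r)) ->
  forall w1 w2, pcong R w1 w2 -> odd (size w1) = odd (size w2).
Proof.
move=> Reven w1 w2; elim=> //.
- by move=> ? ? ? _ -> _ ->.
- by move=> a b y s; rewrite !size_cat !oddD /=; case: odd; case: odd.
- move=> a b u v /Reven.
  rewrite /rel_length odd_size_free_reduce /inv_word !size_cat size_rev size_map.
  by rewrite !oddD; case: (odd (size u)) (odd (size v)) => [] [].
Qed.

Lemma presents_odd_size (G : group) (gen : X -> G) (R : word X * word X -> Prop) :
  presents gen R -> (forall r, R r -> ~~ odd (rel_length r)) ->
  forall w1 w2, eval gen w1 = eval gen w2 -> odd (size w1) = odd (size w2).
Proof. by move=> [_ evalP] Reven w1 w2 /evalP; apply: pcong_odd_size. Qed.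

End LengthParity.

Section InvolutiveGenerators.
Variables (X : eqType) (G : group) (gen : X -> G).
Hypothesis gen_invol : forall y, gmul (gen y) (gen y) = gone G.

Lemma ginv_gen y : ginv (gen y) = gen y.
Proof. by rewrite -[LHS]gmulg1 -(gen_invol y) gmulA gmulV gmul1. Qed.

Lemma gen_mulKg y (a : G) : gmul (gen y) (gmul (gen y) a) = a.
Proof. by rewrite gmulA gen_invol gmul1. Qed.

Lemma eval_cons_gen y b (t : word X) :
  eval gen ((y, b) :: t) = gmul (gen y) (eval gen t).
Proof. by case: b; rewrite /= /letter //= ginv_gen. Qed.

Lemma reduced_expr_behead (g : G) y b t :
  reduced_expr gen g ((y, b) :: t) -> reduced_expr gen (gmul (gen y) g) t.
Proof.
move=> [evals minimal]; split; first by rewrite -evals eval_cons_gen gen_mulKg.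
move=> t' evalt'; have := minimal ((y, b) :: t').
by rewrite eval_cons_gen evalt' gen_mulKg; apply.
Qed.

Lemma reduced_expr_cons (g : G) y t s :
  reduced_expr gen (gmul (gen y) g) t -> reduced_expr gen g s ->
  size t < size s -> reduced_expr gen g ((y, false) :: t).
Proof.
move=> [evalt _] [_ minimal] lt_ts.
split=> [|w' /minimal]; first by rewrite eval_cons_gen evalt gen_mulKg.
exact: leq_trans.
Qed.

Hypothesis eval_odd_size :
  forall w1 w2, eval gen w1 = eval gen w2 -> odd (size w1) = odd (size w2).

Lemma reduced_size_mul_gen_neq (g : G) y t s :
  reduced_expr gen (gmul (gen y) g) t -> reduced_expr gen g s ->
  size t != size s.
Proof.
move=> [evalt _] [evals _]; apply/negP => /eqP eq_ts.
have eval_yt : eval gen ((y, false) :: t) = eval gen s.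
  by rewrite eval_cons_gen evalt evals gen_mulKg.
by move: (eval_odd_size eval_yt); rewrite /= eq_ts; case: odd.
Qed.

End InvolutiveGenerators.

Theorem lemma3p2 (X : eqType) (G : group) (gen : X -> G)
  (R : word X * word X -> Prop)
  (Hpres : presents gen R)
  (Hinvol : forall x : X, gmul (gen x) (gen x) = gone G)
  (Heven : forall r, R r -> ~~ odd (rel_length r))
  (x : X) (w : G) (hw : w <> gone G) :
  in_IG gen (fun y => y != x) w <->
  (forall s, reduced_expr gen w s -> exists b t, s = (x, b) :: t).
Proof.
split=> [inIG [|[y b] t] reds|all_x y y_neq_x n m [t [redt <-]] [s [reds <-]]].
- by case: hw; case: reds.
- have [<-|y_neq_x] := eqVneq y x; first by exists b, t.
  have redt := reduced_expr_behead Hinvol reds.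
  have /negP[] : ~~ (size ((y, b) :: t) < size t) by rewrite ltnNge leqnSn.
  by apply: inIG y_neq_x _ _ _ _; [exists t | exists ((y, b) :: t)].
- rewrite ltn_neqAle eq_sym (reduced_size_mul_gen_neq Hinvol
    (presents_odd_size Hpres Heven) redt reds) /= leqNgt.
  apply/negP => lt_ts.
  have [b [t' [y_eq_x _]]] := all_x _ (reduced_expr_cons Hinvol redt reds lt_ts).
  by rewrite y_eq_x eqxx in y_neq_x.
Qed.
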